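(* Let $\mathcal{R}$ be the involutive system $u_{ij}=f_{ij}(x^1,x^2,x^3,u,u_i,u_j)$, $1\le i<j\le 3$, with infinite prolongation $\mathcal{R}^\infty$, characteristic vector fields $X_i=D_i$, rescaled contact form $\Theta=\mu\theta$, and characteristic coframe forms $\xi_j^k=X_j^k(\Theta)$. Then for every $k\ge 1$ and every $i\neq j$ in $\{1,2,3\}$, the form $X_i(\xi_j^k)$, restricted to $\mathcal{R}^\infty$, has adapted order less than or equal to $k$.
   Context: Setting: $U\subset\mathbb{R}^3$ open connected, $E=U\times(a,b)\to U$ trivial bundle with coordinates $(x^1,x^2,x^3,u)$, $J^\infty(E)$ its infinite jet bundle with coordinates $x^i,u,u_I$ and contact forms $\theta_I=du_I-\sum_{j}u_{Ij}dx^j$ (write $\theta=\theta_\emptyset=du-\sum_i u_i dx^i$). $\mathcal{R}$ is the system $F_{ij}:=u_{ij}-f_{ij}(x^1,x^2,x^3,u,u_i,u_j)=0$, $1\le i<j\le 3$, with $f_{ij}$ smooth and satisfying the integrability conditions $D_kf_{ij}=D_if_{kj}$ for distinct $i,j,k$ (so the system is involutive). $\mathcal{R}^\infty\subset J^\infty(E)$ is its infinite prolongation (locus where all $F_{ij}$ and all their total derivatives vanish), with coordinates $(x^i,u,u_i,u_{ii},\dots,u_{i^k},\dots)$. $D_i$ denotes the total derivative restricted to $\mathcal{R}^\infty$; these commute, and $X_i:=D_i$, $\sigma_i:=dx^i$. Forms on $\mathcal{R}^\infty$ are bigraded, $\Omega^{r,s}$ = forms of horizontal degree $r$ (in $dx^i$)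 and contact degree $s$; $d=d_H+d_V$. For a total vector field $X$ and $\omega\in\Omega^{r,s}$, $X(\omega)$ denotes the projected Lie derivative $\pi^{r,s}(\mathcal{L}_X\omega)$; one has $X_j(\theta_I)=\theta_{Ij}$ and $d_H\omega=\sum_i\sigma_i\wedge X_i(\omega)$. Applying $d_V$ to $F_{ij}=0$ gives on $\mathcal{R}^\infty$: $X_iX_j(\theta)+a^i_{ij}X_i(\theta)+a^j_{ij}X_j(\theta)+c_{ij}\theta=0$ with $a^i_{ij}=\partial F_{ij}/\partial u_i$, $a^j_{ij}=\partial F_{ij}/\partial u_j$, $c_{ij}=\partial F_{ij}/\partial u$. For a nonvanishing function $\mu$ on $\mathcal{R}^\infty$ set $\Theta=\mu\theta$. Define $\xi_i^k=X_i^k(\Theta)$ for $i=1,2,3$, $k\ge1$. A form on $\mathcal{R}^\infty$ has adapted order $\le k$ if it lies in the exterior algebra generated over $C^\infty(\mathcal{R}^\infty)$ by $\{\sigma_1,\sigma_2,\sigma_3,\Theta,\xi_1^1,\xi_2^1,\xi_3^1,\dots,\xi_1^k,\xi_2^k,\xi_3^k\}$; its adapted order is the minimal such $k$. *)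

From mathcomp Require Import all_boot all_order all_algebra.
Set Implicit Arguments. Unset Strict Implicit. Unset Printing Implicit Defensive.
Import GRing.Theory.
Local Open Scope ring_scope.

Section JetModel.
Variables (A : comUnitRingType) (M : lmodType A).

(* D i : total derivative D_i acting on functions C^oo(R^infty) = A. *)
Definition is_derivation (d : A -> A) : Prop :=
  (forall f g, d (f + g) = d f + d g) /\ (forall f g, d (f * g) = d f * g + f * d g).

(* X i : projected Lie derivative of the total vector field X_i = D_i on
   the module M of (0,1)-forms (contact one-forms) on R^infty. *)
Definition is_total_lie (d : A -> A) (x : M -> M) : Prop :=
  (forall w v, x (w + v) = x w + x v) /\
  (forall f w, x (f *: w) = d f *: w + f *: x w).

Definition Theta (mu : A) (theta : M) : M := mu *: theta.
Definition xi (X : 'I_3 -> M -> M) (mu : A) (theta : M) (j : 'I_3) (k : nat) : M :=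
  iter k (X j) (Theta mu theta).

(* A (0,1)-form has adapted order <= k iff it lies in the C^oo(R^infty)-span of
   Theta, xi_l^m (l = 1,2,3, 1 <= m <= k): the degree-(0,1) part of the exterior
   algebra generated by sigma_l, Theta, xi_l^m (m <= k). *)
Definition adapted_order_le (X : 'I_3 -> M -> M) (mu : A) (theta : M)
    (k : nat) (w : M) : Prop :=
  exists (c0 : A) (c : 'I_3 -> nat -> A),
    w = c0 *: Theta mu theta
        + \sum_(l < 3) \sum_(1 <= m < k.+1) c l m *: xi X mu theta l m.
End JetModel.

(* For k = 1, expanding X_i X_j (mu theta) by the Leibniz rule leaves
   theta = mu^-1 Theta, X_l theta = mu^-1 (xi_l^1 - (D_l mu) theta) and
   X_i X_j theta, which the linearised equation of R reduces to the previous
   ones.  For k > 1, commuting X_i and X_j gives X_i xi_j^k = X_j (X_i xi_j^(k-1)),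
   and X_j raises the adapted order of a form by at most one as soon as the claim
   holds in lower orders, since X_j xi_j^m = xi_j^(m+1). *)
From mathcomp Require Import all_boot all_order all_algebra.
Import GRing.Theory.
Local Open Scope ring_scope.

Section AdaptedSpan.
Variables (A : comUnitRingType) (M : lmodType A).
Variables (X : 'I_3 -> M -> M) (mu : A) (theta : M).

Local Notation adapted := (adapted_order_le X mu theta).

Lemma adaptedD k w v : adapted k w -> adapted k v -> adapted k (w + v).
Proof.
move=> [c0 [c ->]] [d0 [d ->]].
exists (c0 + d0), (fun l m => c l m + d l m).
rewrite scalerDl addrACA; congr (_ + _).
rewrite -big_split; apply: eq_bigr => l _.
by rewrite -big_split; apply: eq_bigr => m _; rewrite scalerDl.
Qed.

Lemma adaptedZ k a w : adapted k w -> adapted k (a *: w).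
Proof.
move=> [c0 [c ->]].
exists (a * c0), (fun l m => a * c l m).
rewrite scalerDr scalerA scaler_sumr; congr (_ + _).
apply: eq_bigr => l _; rewrite scaler_sumr; apply: eq_bigr => m _.
by rewrite scalerA.
Qed.

Lemma adaptedN k w : adapted k w -> adapted k (- w).
Proof. by rewrite -scaleN1r; apply: adaptedZ. Qed.

Lemma adapted0 k : adapted k 0.
Proof.
exists 0, (fun _ _ => 0); rewrite scale0r add0r big1 // => l _.
by rewrite big1 // => m _; rewrite scale0r.
Qed.

Lemma adapted_sum k (I : Type) (r : seq I) (P : pred I) (F : I -> M) :
  (forall i, P i -> adapted k (F i)) -> adapted k (\sum_(i <- r | P i) F i).
Proof. by move=> hF; apply: big_ind => //; [apply: adapted0 | apply: adaptedD]. Qed.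

Lemma adapted_Theta k : adapted k (Theta mu theta).
Proof.
exists 1, (fun _ _ => 0); rewrite scale1r big1 ?addr0 // => l _.
by rewrite big1 // => m _; rewrite scale0r.
Qed.

Lemma adapted_xi k l m : (1 <= m <= k)%N -> adapted k (xi X mu theta l m).
Proof.
move=> hm.
exists 0, (fun l' m' => if (l' == l) && (m' == m) then 1 else 0).
rewrite scale0r add0r (bigD1 l) //= [X in _ + X]big1 ?addr0.
  rewrite (bigD1_seq m) /= ?iota_uniq ?mem_index_iota //.
  rewrite !eqxx scale1r big1_seq ?addr0 // => m' /andP [hm' _].
  by rewrite (negbTE hm') andbF scale0r.
move=> l' hl'; rewrite big1 // => m' _.
by rewrite (negbTE hl') scale0r.
Qed.

Lemma adapted_widen k k' w : (k <= k')%N -> adapted k w -> adapted k' w.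
Proof.
move=> hk [c0 [c ->]].
exists c0, (fun l m => if (m <= k)%N then c l m else 0); congr (_ + _).
apply: eq_bigr => l _.
rewrite [RHS](@big_cat_nat _ _ _ k.+1) //=.
rewrite [X in _ = _ + X]big_nat_cond [X in _ = _ + X]big1 ?addr0.
  by apply: eq_big_nat => m /andP [_]; rewrite ltnS => ->.
by move=> m /andP [/andP [hm _] _]; rewrite leqNgt hm scale0r.
Qed.

Lemma adapted_theta k : mu \is a GRing.unit -> adapted k theta.
Proof.
move=> hmu; have {2}-> : theta = mu^-1 *: Theta mu theta.
  by rewrite /Theta scalerA mulVr ?scale1r.
by apply: adaptedZ; apply: adapted_Theta.
Qed.

End AdaptedSpan.

Lemma total_lie_sum {A : comUnitRingType} {M : lmodType A} {d : A -> A}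
    {x : M -> M} {I : Type} {r : seq I} {P : pred I} {F : I -> M} :
  is_total_lie d x -> x (\sum_(i <- r | P i) F i) = \sum_(i <- r | P i) x (F i).
Proof.
move=> [xD _]; apply: (big_morph x xD).
by apply: (addrI (x 0)); rewrite -xD !addr0.
Qed.

Section CharacteristicFields.
Context {A : comUnitRingType} {M : lmodType A}.
Context {D : 'I_3 -> A -> A} {X : 'I_3 -> M -> M} {mu : A} {theta : M}.
Hypothesis hX : forall l, is_total_lie (D l) (X l).

Local Notation adapted := (adapted_order_le X mu theta).
Local Notation xi := (xi X mu theta).

Definition mixed_adapted k := forall i j, i != j -> adapted k (X i (xi j k)).

Lemma adapted_X k l w :
  (forall m, (1 <= m <= k)%N -> mixed_adapted m) ->
  adapted k w -> adapted k.+1 (X l w).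
Proof.
move=> hmixed [c0 [c ->]]; have [xD xZ] := hX l.
rewrite xD xZ (total_lie_sum (hX l)).
apply: adaptedD; first apply: adaptedD.
- by apply: adaptedZ; apply: adapted_Theta.
- by apply: adaptedZ; rewrite -[X l _]/(xi l 1); apply: adapted_xi.
apply: adapted_sum => l' _.
rewrite big_nat_cond (total_lie_sum (hX l)).
apply: adapted_sum => m /andP [/andP [m_gt0 m_lek] _].
rewrite xZ; apply: adaptedD; apply: adaptedZ.
  by apply: adapted_xi; rewrite m_gt0 ltnW.
have [<-|ne] := eqVneq l l'.
  by rewrite -[X l _]/(xi l m.+1); apply: adapted_xi; rewrite ltnS m_lek.
apply: (@adapted_widen _ _ _ _ _ m); first exact: leq_trans (ltnW m_lek) _.
by apply: hmixed => //; rewrite m_gt0 -ltnS.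
Qed.

Hypothesis hXcomm : forall i j w, X i (X j w) = X j (X i w).

Lemma mixed_adapted_gt0 k : mixed_adapted 1 -> (0 < k)%N -> mixed_adapted k.
Proof.
move=> base; elim/ltn_ind: k => -[|[|k]] IH // _ i j ne.
rewrite hXcomm; apply: adapted_X; last exact: IH.
by move=> m /andP [m_gt0 m_le]; apply: IH.
Qed.

Hypothesis hmu : mu \is a GRing.unit.

Lemma adapted_X_theta l : adapted 1 (X l theta).
Proof.
have -> : X l theta = mu^-1 *: (xi l 1 - D l mu *: theta).
  by rewrite /= /Theta (hX l).2 addrC addKr scalerA mulVr ?scale1r.
apply: adaptedZ; apply: adaptedD; first exact: adapted_xi.
by apply: adaptedN; apply: adaptedZ; apply: adapted_theta.
Qed.

Context {a_i a_j c : 'I_3 -> 'I_3 -> A}.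
Hypothesis hrel : forall i j : 'I_3, (i < j)%N ->
  X i (X j theta) + a_i i j *: X i theta + a_j i j *: X j theta
    + c i j *: theta = 0.

Lemma adapted_XX_theta i j : i != j -> adapted 1 (X i (X j theta)).
Proof.
wlog lt_ij : i j / (i < j)%N => [hwlog ne|_].
  case: (ltngtP i j) => [lt_ij | lt_ji | /val_inj eq_ij].
  - exact: hwlog.
  - by rewrite hXcomm; apply: hwlog; rewrite // eq_sym.
  - by rewrite eq_ij eqxx in ne.
move/eqP: (hrel _ _ lt_ij); rewrite -!addrA addr_eq0 => /eqP ->.
apply: adaptedN; apply: adaptedD; first by apply: adaptedZ; apply: adapted_X_theta.
apply: adaptedD; apply: adaptedZ; [exact: adapted_X_theta | exact: adapted_theta].
Qed.

Lemma mixed_adapted1 : mixed_adapted 1.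
Proof.
move=> i j ne; rewrite /= /Theta (hX j).2 (hX i).1 !(hX i).2.
apply: adaptedD; apply: adaptedD; apply: adaptedZ.
- exact: adapted_theta.
- exact: adapted_X_theta.
- exact: adapted_X_theta.
- exact: adapted_XX_theta.
Qed.

End CharacteristicFields.

Theorem lemma3p3 (A : comUnitRingType) (M : lmodType A)
  (D : 'I_3 -> A -> A) (X : 'I_3 -> M -> M) (theta : M)
  (a_i a_j c : 'I_3 -> 'I_3 -> A) (mu : A)
  (hD : forall i, is_derivation (D i))
  (hDcomm : forall i j f, D i (D j f) = D j (D i f))
  (hX : forall i, is_total_lie (D i) (X i))
  (hXcomm : forall i j w, X i (X j w) = X j (X i w))
  (hrel : forall i j : 'I_3, (i < j)%N ->
     X i (X j theta) + a_i i j *: X i theta + a_j i j *: X j theta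
       + c i j *: theta = 0)
  (hmu : mu \is a GRing.unit) :
  forall (k : nat) (i j : 'I_3), (1 <= k)%N -> i != j ->
    adapted_order_le X mu theta k (X i (xi X mu theta j k)).
Proof.
move=> k i j k_gt0.
exact: (mixed_adapted_gt0 hX hXcomm k (mixed_adapted1 hX hXcomm hmu hrel) k_gt0 i j).
Qed.
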